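(* Let $X$ and $Y$ be represented spaces, let $R\subseteq\mathbb{N}^\mathbb{N}$ be endowed with a Borel measure $\mu_R$, let $I$ be an interval and let $f:\subseteq X\rightrightarrows Y$ be a multi-valued function. Then $f\le_W \mathsf{P}_I\mathsf{C}_R$ if and only if $f$ is Las Vegas computable over $R$ with measure in $I$.
   Context: A represented space is a pair $(X,\delta_X)$ where $\delta_X:\subseteq\mathbb{N}^\mathbb{N}\to X$ is a partial surjection; subsets of $\mathbb{N}^\mathbb{N}$ are represented by the identity, and pairs by the standard pairing $\langle p,q\rangle(2k)=p(k)$, $\langle p,q\rangle(2k+1)=q(k)$. Problems are partial multi-valued functions $f:\subseteq X\rightrightarrows Y$. A realizer of $f$ is a partial $F:\subseteq\mathbb{N}^\mathbb{N}\to\mathbb{N}^\mathbb{N}$ with $\delta_Y F(p)\in f(\delta_X(p))$ for all $p\in\mathrm{dom}(f\circ\delta_X)$. $f$ is Weihrauch reducible to $g$, written $f\le_W g$, if there are computable partial $H,K:\subseteq\mathbb{N}^\mathbb{N}\to\mathbb{N}^\mathbb{N}$ such that $p\mapsto H\langle p,GK(p)\rangle$ realizes $f$ for every realizer $G$ of $g$. Sierpiński space $\mathbb{S}=\{0,1\}$ is represented by $\delta_{\mathbb S}(p)=0$ if $p$ is the constant zero sequence and $\delta_{\mathbb S}(p)=1$ otherwise. For a represented space $X$, $\mathcal{A}_-(X)$ denotes the set of closed subsets of $X$ represented by negative information: a name of $A$ is a name of the characteristic function $X\to\mathbb S$ of $X\setminus A$. An interval is an interval of reals with open or closed endpoints,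 where $\infty$ is allowed as (open or closed) right endpoint, but $[\infty,\infty]$ is not an interval. If $X$ carries a Borel measure $\mu$ and $I$ is an interval, probabilistic choice $\mathsf{P}_I\mathsf{C}_X:\subseteq\mathcal{A}_-(X)\rightrightarrows X$, $A\mapsto A$, is defined on all nonempty closed $A\subseteq X$ with $\mu(A)\in I$ (any point of $A$ is an admissible output). Las Vegas computability: for $R\subseteq\mathbb{N}^\mathbb{N}$ with Borel measure $\mu_R$ and interval $I$, $f:\subseteq X\rightrightarrows Y$ is Las Vegas computable over $R$ with measure in $I$ if there exist computable $F_1,F_2:\subseteq\mathbb{N}^\mathbb{N}\to\mathbb{N}^\mathbb{N}$ such that $\langle p,r\rangle\in\mathrm{dom}(F_2)$ for all $p\in\mathrm{dom}(f\delta_X)$, $r\in R$, and for each $p\in\mathrm{dom}(f\delta_X)$: (1) $S_p:=\{r\in R:\delta_{\mathbb S}F_2\langle p,r\rangle=0\}$ is non-empty and $\mu_R(S_p)\in I$; (2) $\delta_YF_1\langle p,r\rangle\in f\delta_X(p)$ for all $r\in S_p$. *)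

From Stdlib Require Import Reals List Arith.
Import ListNotations.
Open Scope R_scope.

Definition baire := nat -> nat.

Definition pairB (p q : baire) : baire :=
  fun n => if Nat.even n then p (Nat.div2 n) else q (Nat.div2 n).

Definition prefix (p : baire) (k : nat) : list nat := map p (seq 0 k).

Definition pairN (a b : nat) : nat := ((a + b) * (a + b + 1) / 2 + b)%nat.
Fixpoint code_list (l : list nat) : nat :=
  match l with
  | [] => 0%nat
  | x :: l' => S (pairN x (code_list l'))
  end.

Inductive recf : Type :=
| RZero : recf
| RSucc : recf
| RProj : nat -> recf
| RComp : recf -> list recf -> recf
| RPrim : recf -> recf -> recf
| RMu : recf -> recf.

Inductive eval : recf -> list nat -> nat -> Prop :=
| e_zero l : eval RZero l 0
| e_succ l : eval RSucc l (S (hd 0%nat l))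
| e_proj i l : eval (RProj i) l (nth i l 0%nat)
| e_comp f gs l vs v : eval_list gs l vs -> eval f vs v -> eval (RComp f gs) l v
| e_prim0 f g l v : eval f l v -> eval (RPrim f g) (0%nat :: l) v
| e_primS f g n l r v :
    eval (RPrim f g) (n :: l) r -> eval g (n :: r :: l) v ->
    eval (RPrim f g) (S n :: l) v
| e_mu f l n :
    eval f (n :: l) 0%nat ->
    (forall m, (m < n)%nat -> exists k, eval f (m :: l) (S k)) ->
    eval (RMu f) l n
with eval_list : list recf -> list nat -> list nat -> Prop :=
| el_nil l : eval_list [] l []
| el_cons g gs l v vs :
    eval g l v -> eval_list gs l vs -> eval_list (g :: gs) l (v :: vs).

Definition computable_nat (h : nat -> nat) : Prop :=
  exists c : recf, forall n, eval c [n] (h n).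

Definition pfun := baire -> baire -> Prop.

Definition functional (F : pfun) : Prop :=
  forall p q1 q2, F p q1 -> F p q2 -> q1 = q2.

(** The partial function eta_h : N^N -> N^N coded by the associate h:
    eta_h(q)(n) = h(<n, q[0..k)>) - 1 for the least k with h(<n,q[0..k)>) > 0. *)
Definition assoc_eval (h : baire) : pfun :=
  fun q r => forall n, exists k,
    (0 < h (pairN n (code_list (prefix q k))))%nat /\
    (forall j, (j < k)%nat -> h (pairN n (code_list (prefix q j))) = 0%nat) /\
    r n = (h (pairN n (code_list (prefix q k))) - 1)%nat.

Definition computable (F : pfun) : Prop :=
  exists h, computable_nat h /\ forall p q, F p q -> assoc_eval h p q.

Definition rep (X : Type) := baire -> X -> Prop.

Definition is_rep {X : Type} (d : rep X) : Prop :=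
  (forall p x y, d p x -> d p y -> x = y) /\ (forall x, exists p, d p x).

(** F realizes the multi-valued f : ⊆ X ⇉ Y  (dom f = {x | exists y, f x y}) *)
Definition realizes {X Y : Type} (dX : rep X) (dY : rep Y)
  (f : X -> Y -> Prop) (F : pfun) : Prop :=
  forall p x, dX p x -> (exists y, f x y) ->
    exists q y, F p q /\ dY q y /\ f x y.

Definition weihrauch {X Y Z W : Type} (dX : rep X) (dY : rep Y)
  (f : X -> Y -> Prop) (dZ : rep Z) (dW : rep W) (g : Z -> W -> Prop) : Prop :=
  exists H K : pfun, computable H /\ computable K /\
    forall G : pfun, functional G -> realizes dZ dW g G ->
      realizes dX dY f
        (fun p r => exists k s, K p k /\ G k s /\ H (pairB p s) r).

Definition deltaS : rep bool :=
  fun p b => (b = false /\ forall n, p n = 0%nat) \/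
             (b = true /\ exists n, p n <> 0%nat).

Definition deltaFunS {X : Type} (dX : rep X) : rep (X -> bool) :=
  fun p phi => realizes dX deltaS (fun x b => phi x = b) (assoc_eval p).

(** A_-(X): a name of A is a name of the characteristic function of X \ A *)
Definition deltaA {X : Type} (dX : rep X) : rep (X -> Prop) :=
  fun p A => exists chi, deltaFunS dX p chi /\
                         forall x, chi x = true <-> ~ A x.

Definition sub (R : baire -> Prop) := { r : baire | R r }.
Definition deltaSub (R : baire -> Prop) : rep (sub R) :=
  fun p r => proj1_sig r = p.

Definition closedR {R : baire -> Prop} (A : sub R -> Prop) : Prop :=
  forall r, ~ A r -> exists n, forall r',
    prefix (proj1_sig r') n = prefix (proj1_sig r) n -> ~ A r'.

Inductive borel (R : baire -> Prop) : (sub R -> Prop) -> Prop :=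
| b_cyl (s : list nat) :
    borel R (fun r => prefix (proj1_sig r) (length s) = s)
| b_compl A : borel R A -> borel R (fun r => ~ A r)
| b_union (A : nat -> sub R -> Prop) :
    (forall n, borel R (A n)) -> borel R (fun r => exists n, A n r)
| b_ext A B : borel R A -> (forall r, A r <-> B r) -> borel R B.

Inductive ereal : Type := EFin (x : R) | EInf.

Definition ele (a b : ereal) : Prop :=
  match a, b with
  | EFin x, EFin y => x <= y
  | _, EInf => True
  | EInf, EFin _ => False
  end.

Definition eadd (a b : ereal) : ereal :=
  match a, b with
  | EFin x, EFin y => EFin (x + y)
  | _, _ => EInf
  end.

Fixpoint psum (a : nat -> ereal) (n : nat) : ereal :=
  match n with
  | O => EFin 0
  | S m => eadd (psum a m) (a m)
  end.

Definition esum (a : nat -> ereal) (s : ereal) : Prop :=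
  (forall n, ele (psum a n) s) /\
  (forall b, (forall n, ele (psum a n) b) -> ele s b).

Definition borel_measure (R : baire -> Prop) (mu : (sub R -> Prop) -> ereal) : Prop :=
  (forall A B, (forall r, A r <-> B r) -> mu A = mu B) /\
  (forall A, borel R A -> ele (EFin 0) (mu A)) /\
  mu (fun _ => False) = EFin 0 /\
  (forall A : nat -> sub R -> Prop,
     (forall n, borel R (A n)) ->
     (forall n m r, n <> m -> A n r -> A m r -> False) ->
     esum (fun n => mu (A n)) (mu (fun r => exists n, A n r))).

Record interval : Type := mkInterval {
  lo : R; lo_closed : bool; hi : ereal; hi_closed : bool }.

Definition interval_wf (I : interval) : Prop := ele (EFin (lo I)) (hi I).

Definition in_interval (I : interval) (v : ereal) : Prop :=
  (match v with
   | EFin x => if lo_closed I then lo I <= x else lo I < x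
   | EInf => True
   end) /\
  (match hi I, v with
   | EFin h, EFin x => if hi_closed I then x <= h else x < h
   | EFin _, EInf => False
   | EInf, EFin _ => True
   | EInf, EInf => hi_closed I = true
   end).

Definition PC (R : baire -> Prop) (mu : (sub R -> Prop) -> ereal) (I : interval)
  (A : sub R -> Prop) (x : sub R) : Prop :=
  closedR A /\ (exists y, A y) /\ in_interval I (mu A) /\ A x.

Definition las_vegas {X Y : Type} (dX : rep X) (dY : rep Y) (f : X -> Y -> Prop)
  (R : baire -> Prop) (mu : (sub R -> Prop) -> ereal) (I : interval) : Prop :=
  exists F1 F2 : pfun, computable F1 /\ computable F2 /\
    forall p x, dX p x -> (exists y, f x y) ->
      let S := fun r : sub R =>
        exists q, F2 (pairB p (proj1_sig r)) q /\ forall n, q n = 0%nat in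
      (forall r : baire, R r -> exists q, F2 (pairB p r) q) /\
      (exists r, S r) /\ in_interval I (mu S) /\
      (forall r, S r -> exists q y, F1 (pairB p (proj1_sig r)) q /\ dY q y /\ f x y).

(** Both directions rest on two uniformities of type-2 computability:
    - currying (an s-m-n theorem for associates): from an associate of
      [F2 : <p,r> |-> q] one computes, uniformly in [p], an associate of
      [r |-> F2<p,r>]; this associate is a negative name of the closed set
      [S_p] of successful random advice, so it serves as the instance
      [K(p)] handed to [P_I C_R];
    - evaluation (a universal machine for associates): from an associate of
      [K] one computes [<p,r> |-> eta_{K(p)}(r)], which turns the name
      [K(p)] of a closed set [A] back into a test [F2] whose zero set is [A]. *)
From Stdlib Require Import List Arith Lia Classical
  ClassicalEpsilon FunctionalExtensionality PropExtensionality.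
Import ListNotations.
Local Open Scope nat_scope.

(** * Computable functions on argument lists *)

Definition rcomputable (n : nat) (f : list nat -> nat) : Prop :=
  exists c, forall l, length l = n -> eval c l (f l).

Lemma rcomputable_ext n f g :
  (forall l, length l = n -> f l = g l) -> rcomputable n f -> rcomputable n g.
Proof. intros H [c Hc]. exists c. intros l Hl. rewrite <- H by auto. auto. Qed.

Lemma rcomputable_proj n i : rcomputable n (fun l => nth i l 0).
Proof. exists (RProj i). intros. constructor. Qed.

Lemma rcomputable_succ n a : rcomputable n a -> rcomputable n (fun l => S (a l)).
Proof.
  intros [c Hc]. exists (RComp RSucc [c]). intros l Hl.
  econstructor; [constructor; [apply Hc; auto | constructor] | constructor].
Qed.

Lemma rcomputable_const n k : rcomputable n (fun _ => k).
Proof.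
  induction k as [|k IH]; [exists RZero; intros; constructor|].
  exact (rcomputable_succ n (fun _ => k) IH).
Qed.

Lemma rcomputable_comp m n g gs :
  rcomputable m g -> Forall (rcomputable n) gs -> length gs = m ->
  rcomputable n (fun l => g (map (fun h => h l) gs)).
Proof.
  intros [c Hc] Hgs Hlen.
  assert (Hcs : exists cs, forall l, length l = n ->
            eval_list cs l (map (fun h => h l) gs)).
  { clear Hlen. induction Hgs as [|h gs [ch Hch] _ [cs Hcs]].
    - exists []. intros; constructor.
    - exists (ch :: cs). intros; simpl; constructor; auto. }
  destruct Hcs as [cs Hcs]. exists (RComp c cs). intros l Hl.
  econstructor; [apply Hcs; auto | apply Hc; rewrite length_map; auto].
Qed.

Lemma rcomputable_prim n f g :
  rcomputable n f -> rcomputable (S (S n)) g ->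
  rcomputable (S n) (fun l => nat_rect (fun _ => nat) (f (tl l))
                                 (fun i r => g (i :: r :: tl l)) (hd 0 l)).
Proof.
  intros [cf Hf] [cg Hg]. exists (RPrim cf cg).
  intros [|x l] Hl; simpl in Hl; [discriminate|]. injection Hl as Hl. simpl.
  induction x as [|x IH]; simpl.
  - constructor. auto.
  - econstructor; [apply IH | apply Hg; simpl; auto].
Qed.

Definition projs (k n : nat) : list (list nat -> nat) :=
  map (fun i l => nth i l 0) (seq k n).

Lemma projs_rcomputable k n m : Forall (rcomputable m) (projs k n).
Proof.
  apply Forall_forall. intros x Hx. apply in_map_iff in Hx.
  destruct Hx as [i [<- _]]. apply rcomputable_proj.
Qed.

Lemma length_projs k n : length (projs k n) = n.
Proof. unfold projs. rewrite length_map, length_seq. auto. Qed.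

Lemma map_projs (l0 l : list nat) :
  map (fun h => h (l0 ++ l)) (projs (length l0) (length l)) = l.
Proof.
  unfold projs. rewrite map_map. revert l0.
  induction l as [|a l IH]; intros l0; simpl; auto.
  rewrite app_nth2, Nat.sub_diag by lia. simpl. f_equal.
  specialize (IH (l0 ++ [a])). rewrite <- app_assoc, length_app in IH.
  simpl in IH. rewrite Nat.add_1_r in IH. exact IH.
Qed.

Lemma map_projs0 l : map (fun h => h l) (projs 0 (length l)) = l.
Proof. exact (map_projs [] l). Qed.

Lemma map_projs2 a b l : map (fun h => h (a :: b :: l)) (projs 2 (length l)) = l.
Proof. exact (map_projs [a; b] l). Qed.

Lemma rcomputable_rec n e f g :
  rcomputable n e -> rcomputable n f -> rcomputable (S (S n)) g ->
  rcomputable n (fun l => nat_rect (fun _ => nat) (f l)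
                            (fun i r => g (i :: r :: l)) (e l)).
Proof.
  intros He Hf Hg.
  eapply rcomputable_ext;
    [| apply (rcomputable_comp (S n) n _ (e :: projs 0 n)
                (rcomputable_prim n f g Hf Hg))].
  - intros l Hl. subst n. simpl. rewrite map_projs0. reflexivity.
  - constructor; [auto | apply projs_rcomputable].
  - simpl. rewrite length_projs. auto.
Qed.

Lemma rcomputable_drop2 n b :
  rcomputable n b -> rcomputable (S (S n)) (fun l => b (skipn 2 l)).
Proof.
  intros Hb. eapply rcomputable_ext;
    [| apply (rcomputable_comp n (S (S n)) b (projs 2 n) Hb);
       [apply projs_rcomputable | apply length_projs]].
  intros [|x [|y l]] Hl; simpl in Hl; try discriminate. injection Hl as Hl.
  subst n. rewrite map_projs2. reflexivity.
Qed.

Lemma rcomputable_push_drop2 n P a :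
  rcomputable (S n) P -> rcomputable (S (S n)) a ->
  rcomputable (S (S n)) (fun l => P (a l :: skipn 2 l)).
Proof.
  intros HP Ha. eapply rcomputable_ext;
    [| apply (rcomputable_comp (S n) (S (S n)) P (a :: projs 2 n) HP)].
  - intros [|x [|y l]] Hl; simpl in Hl; try discriminate. injection Hl as Hl.
    subst n. simpl. rewrite map_projs2. reflexivity.
  - constructor; [auto | apply projs_rcomputable].
  - simpl; rewrite length_projs; auto.
Qed.

Lemma rcomputable_push n P a :
  rcomputable (S n) P -> rcomputable n a -> rcomputable n (fun l => P (a l :: l)).
Proof.
  intros HP Ha. eapply rcomputable_ext;
    [| apply (rcomputable_comp (S n) n P (a :: projs 0 n) HP)].
  - intros l Hl. subst n. simpl. rewrite map_projs0. reflexivity.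
  - constructor; [auto | apply projs_rcomputable].
  - simpl; rewrite length_projs; auto.
Qed.

Lemma rcomputable_add n a b :
  rcomputable n a -> rcomputable n b -> rcomputable n (fun l => a l + b l).
Proof.
  intros Ha Hb. eapply rcomputable_ext;
    [| apply (rcomputable_rec n a b (fun l => S (nth 1 l 0)) Ha Hb
               (rcomputable_succ _ _ (rcomputable_proj _ 1)))].
  intros l _. simpl. induction (a l); simpl; auto.
Qed.

Lemma rcomputable_pred n a : rcomputable n a -> rcomputable n (fun l => pred (a l)).
Proof.
  intros Ha. eapply rcomputable_ext;
    [| apply (rcomputable_rec n a (fun _ => 0) (fun l => nth 0 l 0) Ha
               (rcomputable_const _ 0) (rcomputable_proj _ 0))].
  intros l _. simpl. destruct (a l); simpl; auto.
Qed.

Lemma rcomputable_sub n a b :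
  rcomputable n a -> rcomputable n b -> rcomputable n (fun l => a l - b l).
Proof.
  intros Ha Hb. eapply rcomputable_ext;
    [| apply (rcomputable_rec n b a (fun l => pred (nth 1 l 0)) Hb Ha
               (rcomputable_pred _ _ (rcomputable_proj _ 1)))].
  intros l _. simpl. induction (b l) as [|k IH]; simpl; [lia | rewrite IH; lia].
Qed.

Lemma rcomputable_mul n a b :
  rcomputable n a -> rcomputable n b -> rcomputable n (fun l => a l * b l).
Proof.
  intros Ha Hb. eapply rcomputable_ext;
    [| apply (rcomputable_rec n a (fun _ => 0)
               (fun l => b (skipn 2 l) + nth 1 l 0) Ha (rcomputable_const _ 0)
               (rcomputable_add _ _ _ (rcomputable_drop2 _ _ Hb)
                  (rcomputable_proj _ 1)))].
  intros l _. simpl. induction (a l); simpl; auto.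
Qed.

Lemma rcomputable_ifz n c a b :
  rcomputable n c -> rcomputable n a -> rcomputable n b ->
  rcomputable n (fun l => if c l =? 0 then a l else b l).
Proof.
  intros Hc Ha Hb. eapply rcomputable_ext;
    [| apply (rcomputable_rec n c a (fun l => b (skipn 2 l)) Hc Ha
               (rcomputable_drop2 _ _ Hb))].
  intros l _. simpl. destruct (c l); simpl; auto.
Qed.

Lemma rcomputable_call n h a :
  computable_nat h -> rcomputable n a -> rcomputable n (fun l => h (a l)).
Proof.
  intros [c Hc] [ca Ha]. exists (RComp c [ca]). intros l Hl.
  econstructor; [constructor; [apply Ha; auto | constructor] | apply Hc].
Qed.

Definition triangle (x : nat) : nat :=
  nat_rect (fun _ => nat) 0 (fun i r => r + (i + 1)) x.

Lemma triangle_S x : triangle (S x) = triangle x + (x + 1).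
Proof. reflexivity. Qed.

Lemma pairN_triangle a b : pairN a b = triangle (a + b) + b.
Proof.
  unfold pairN. f_equal. induction (a + b) as [|x IH]; [reflexivity|].
  rewrite triangle_S, <- IH.
  replace (S x * (S x + 1)) with (x * (x + 1) + (x + 1) * 2) by lia.
  rewrite Nat.div_add by lia. reflexivity.
Qed.

Lemma rcomputable_pairN n a b :
  rcomputable n a -> rcomputable n b -> rcomputable n (fun l => pairN (a l) (b l)).
Proof.
  intros Ha Hb.
  assert (Htri : rcomputable n (fun l => triangle (a l + b l))).
  { apply (rcomputable_rec n _ (fun _ => 0) (fun l => nth 1 l 0 + (nth 0 l 0 + 1)));
      [apply rcomputable_add; auto | apply rcomputable_const |].
    repeat apply rcomputable_add; apply rcomputable_proj || apply rcomputable_const. }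
  eapply rcomputable_ext; [| exact (rcomputable_add _ _ _ Htri Hb)].
  intros l _. rewrite pairN_triangle. reflexivity.
Qed.

(** [bmin P b]: the least [y < b] with [P y <> 0], or [b] if there is none. *)
Definition bmin (P : nat -> nat) (b : nat) : nat :=
  nat_rect (fun _ => nat) 0
    (fun k r => if k - r =? 0 then (if P k =? 0 then S k else k) else r) b.

Lemma rcomputable_bmin n b P :
  rcomputable n b -> rcomputable (S n) P ->
  rcomputable n (fun l => bmin (fun y => P (y :: l)) (b l)).
Proof.
  intros Hb HP. unfold bmin.
  apply (rcomputable_rec n b (fun _ => 0)
    (fun l => if nth 0 l 0 - nth 1 l 0 =? 0 then
                (if P (nth 0 l 0 :: skipn 2 l) =? 0 then S (nth 0 l 0) else nth 0 l 0)
              else nth 1 l 0)); [auto | apply rcomputable_const |].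
  repeat first [ apply rcomputable_ifz | apply rcomputable_sub
               | apply rcomputable_succ | apply rcomputable_proj
               | apply rcomputable_push_drop2; [exact HP|] ].
Qed.

Lemma rcomputable_build n b P :
  rcomputable n b -> rcomputable (S n) P ->
  rcomputable n (fun l => code_list (map (fun t => P (t :: l)) (seq 0 (b l)))).
Proof.
  intros Hb HP.
  assert (Hbuild : forall (f : nat -> nat) k s, s <= k ->
    nat_rect (fun _ => nat) 0 (fun s r => S (pairN (f (k - S s)) r)) s
    = code_list (map f (seq (k - s) s))).
  { intros f k s. induction s as [|s IH]; intros Hs; [reflexivity|]. simpl.
    rewrite IH by lia. replace (S (k - S s)) with (k - s) by lia. reflexivity. }
  eapply rcomputable_ext;
    [| apply (rcomputable_rec n b (fun _ => 0)
        (fun l => S (pairN (P ((b (skipn 2 l) - S (nth 0 l 0)) :: skipn 2 l))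
                           (nth 1 l 0))))].
  - intros l _. cbn [skipn nth].
    specialize (Hbuild (fun t => P (t :: l)) (b l) (b l) (le_n _)).
    rewrite Nat.sub_diag in Hbuild. exact Hbuild.
  - auto.
  - apply rcomputable_const.
  - apply rcomputable_succ, rcomputable_pairN; [| apply rcomputable_proj].
    apply rcomputable_push_drop2; [exact HP|].
    apply rcomputable_sub; [apply rcomputable_drop2; auto |].
    apply rcomputable_succ, rcomputable_proj.
Qed.

(** * An expression language for computable functions

    Expressions denote functions [list nat -> nat] (de Bruijn-style access
    to the argument list); binders ([ERec], [EMin], [EBuild], [ELet]) push
    their bound values in front.  [EApp1..3] apply a closed expression to
    one to three arguments, which lets us name auxiliary functions; an
    expression computing a function [foo] is named [x_foo]. *)
Inductive expr : Type :=
| EVar (i : nat) | EConst (k : nat)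
| EAdd (a b : expr) | ESub (a b : expr) | EMul (a b : expr)
| EIfz (c a b : expr)
| ECall (h : nat -> nat) (a : expr)
| ERec (e f g : expr)
| EMin (b P : expr)
| EBuild (b P : expr)
| ELet (a body : expr)
| EApp1 (f a : expr) | EApp2 (f a b : expr) | EApp3 (f a b c : expr).

Fixpoint den (e : expr) (l : list nat) : nat :=
  match e with
  | EVar i => nth i l 0
  | EConst k => k
  | EAdd a b => den a l + den b l
  | ESub a b => den a l - den b l
  | EMul a b => den a l * den b l
  | EIfz c a b => if den c l =? 0 then den a l else den b l
  | ECall h a => h (den a l)
  | ERec e f g =>
      nat_rect (fun _ => nat) (den f l) (fun i r => den g (i :: r :: l)) (den e l)
  | EMin b P => bmin (fun y => den P (y :: l)) (den b l)
  | EBuild b P => code_list (map (fun t => den P (t :: l)) (seq 0 (den b l)))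
  | ELet a body => den body (den a l :: l)
  | EApp1 f a => den f [den a l]
  | EApp2 f a b => den f [den a l; den b l]
  | EApp3 f a b c => den f [den a l; den b l; den c l]
  end.

Fixpoint well_formed (n : nat) (e : expr) : Prop :=
  match e with
  | EVar _ | EConst _ => True
  | EAdd a b | ESub a b | EMul a b => well_formed n a /\ well_formed n b
  | EIfz c a b => well_formed n c /\ well_formed n a /\ well_formed n b
  | ECall h a => computable_nat h /\ well_formed n a
  | ERec e f g => well_formed n e /\ well_formed n f /\ well_formed (S (S n)) g
  | EMin b P | EBuild b P => well_formed n b /\ well_formed (S n) P
  | ELet a body => well_formed n a /\ well_formed (S n) body
  | EApp1 f a => well_formed 1 f /\ well_formed n a
  | EApp2 f a b => well_formed 2 f /\ well_formed n a /\ well_formed n b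
  | EApp3 f a b c =>
      well_formed 3 f /\ well_formed n a /\ well_formed n b /\ well_formed n c
  end.

Theorem compile e : forall n, well_formed n e -> rcomputable n (den e).
Proof.
  induction e; intros n Hw; simpl in Hw; simpl.
  - apply rcomputable_proj.
  - apply rcomputable_const.
  - destruct Hw. apply rcomputable_add; auto.
  - destruct Hw. apply rcomputable_sub; auto.
  - destruct Hw. apply rcomputable_mul; auto.
  - destruct Hw as [? [? ?]]. apply rcomputable_ifz; auto.
  - destruct Hw. apply rcomputable_call; auto.
  - destruct Hw as [? [? ?]]. apply rcomputable_rec; auto.
  - destruct Hw. apply rcomputable_bmin; auto.
  - destruct Hw. apply rcomputable_build; auto.
  - destruct Hw. apply (rcomputable_push n (den e2) (den e1)); auto.
  - destruct Hw. exact (rcomputable_comp 1 n (den e1) [den e2] (IHe1 1 H)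
                          (Forall_cons _ (IHe2 n H0) (Forall_nil _)) eq_refl).
  - destruct Hw as [? [? ?]].
    exact (rcomputable_comp 2 n (den e1) [den e2; den e3] (IHe1 2 H)
             (Forall_cons _ (IHe2 n H0) (Forall_cons _ (IHe3 n H1) (Forall_nil _)))
             eq_refl).
  - destruct Hw as [? [? [? ?]]].
    exact (rcomputable_comp 3 n (den e1) [den e2; den e3; den e4] (IHe1 3 H)
             (Forall_cons _ (IHe2 n H0) (Forall_cons _ (IHe3 n H1)
                (Forall_cons _ (IHe4 n H2) (Forall_nil _)))) eq_refl).
Qed.

Corollary compile_nat e : well_formed 1 e -> computable_nat (fun x => den e [x]).
Proof.
  intros H. destruct (compile e 1 H) as [c Hc]. exists c. intros n. apply (Hc [n]).
  reflexivity.
Qed.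

Lemma bmin_S P b : bmin P (S b) =
  (if b - bmin P b =? 0 then (if P b =? 0 then S b else b) else bmin P b).
Proof. reflexivity. Qed.

Lemma bmin_spec P b :
  (bmin P b = b /\ forall y, y < b -> P y = 0) \/
  (bmin P b < b /\ P (bmin P b) <> 0 /\ forall y, y < bmin P b -> P y = 0).
Proof.
  induction b as [|b IH]; [left; split; [reflexivity | intros; lia]|].
  rewrite bmin_S. destruct IH as [[H1 H2]|[H1 [H2 H3]]].
  - rewrite H1, Nat.sub_diag. simpl. destruct (P b) eqn:E; simpl.
    + left. split; auto. intros y Hy.
      destruct (Nat.eq_dec y b); [subst; auto | apply H2; lia].
    + right. split; [lia | split; [rewrite E; auto | auto]].
  - replace (b - bmin P b =? 0) with false by (symmetry; apply Nat.eqb_neq; lia).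
    right. split; [lia | auto].
Qed.

Lemma bmin_eq P b s :
  s < b -> P s <> 0 -> (forall y, y < s -> P y = 0) -> bmin P b = s.
Proof.
  intros Hs HP Hy. destruct (bmin_spec P b) as [[H1 H2]|[H1 [H2 H3]]].
  - exfalso. apply HP. apply H2. auto.
  - destruct (lt_eq_lt_dec (bmin P b) s) as [[H|H]|H]; auto.
    + exfalso. apply H2. apply Hy. auto.
    + exfalso. apply HP. apply H3. auto.
Qed.

Lemma bmin_found P b :
  bmin P b < b -> P (bmin P b) <> 0 /\ (forall y, y < bmin P b -> P y = 0).
Proof. intros H. destruct (bmin_spec P b) as [[H1 H2]|[H1 [H2 H3]]]; [lia | auto]. Qed.

Lemma bmin_all0 P b : (forall y, y < b -> P y = 0) -> bmin P b = b.
Proof.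
  intros H. destruct (bmin_spec P b) as [[H1 H2]|[H1 [H2 H3]]]; auto.
  exfalso. apply H2. apply H. auto.
Qed.

Lemma bmin_ext P Q b : (forall y, y < b -> P y = Q y) -> bmin P b = bmin Q b.
Proof.
  induction b as [|b IH]; intros H; [reflexivity|].
  rewrite !bmin_S, IH by (intros; apply H; lia). rewrite H by lia. reflexivity.
Qed.

Definition lt_flag (a b : nat) : nat := if b - a =? 0 then 0 else 1.

Lemma lt_flag_1 a b : a < b -> lt_flag a b = 1.
Proof. intros. unfold lt_flag. destruct (Nat.eqb_spec (b - a) 0); auto. lia. Qed.

Lemma lt_flag_0 a b : b <= a -> lt_flag a b = 0.
Proof. intros. unfold lt_flag. destruct (Nat.eqb_spec (b - a) 0); auto. lia. Qed.

Lemma lt_flag_cases a b : (a < b /\ lt_flag a b = 1) \/ (b <= a /\ lt_flag a b = 0).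
Proof.
  destruct (lt_dec a b); [left; split; auto; apply lt_flag_1; auto
                         | right; split; [lia | apply lt_flag_0; lia]].
Qed.

Definition x_lt (a b : expr) : expr := EIfz (ESub b a) (EConst 0) (EConst 1).

Definition x_triangle (a : expr) : expr :=
  EApp1 (ERec (EVar 0) (EConst 0) (EAdd (EVar 1) (EAdd (EVar 0) (EConst 1)))) a.

Lemma triangle_mono a b : a <= b -> triangle a <= triangle b.
Proof. induction 1; [auto | rewrite triangle_S; lia]. Qed.

Lemma triangle_ge x : x <= triangle x.
Proof. induction x; [auto | rewrite triangle_S; lia]. Qed.

Definition unpair_sum (m : nat) : nat :=
  bmin (fun s => lt_flag m (triangle (s + 1))) (m + 2).
Definition unpair2 (m : nat) : nat := m - triangle (unpair_sum m).
Definition unpair1 (m : nat) : nat := unpair_sum m - unpair2 m.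

Definition x_unpair_sum : expr :=
  EMin (EAdd (EVar 0) (EConst 2)) (x_lt (EVar 1) (x_triangle (EAdd (EVar 0) (EConst 1)))).
Definition x_unpair2 (a : expr) : expr :=
  EApp1 (ESub (EVar 0) (x_triangle (EApp1 x_unpair_sum (EVar 0)))) a.
Definition x_unpair1 (a : expr) : expr :=
  EApp1 (ESub (EApp1 x_unpair_sum (EVar 0)) (x_unpair2 (EVar 0))) a.
Definition x_pair (a b : expr) : expr :=
  EApp2 (EAdd (x_triangle (EAdd (EVar 0) (EVar 1))) (EVar 1)) a b.

Lemma unpair_sum_pair a b : unpair_sum (pairN a b) = a + b.
Proof.
  rewrite pairN_triangle. unfold unpair_sum. apply bmin_eq.
  - pose proof (triangle_ge (a + b)). lia.
  - rewrite lt_flag_1; [auto | rewrite Nat.add_1_r, triangle_S; lia].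
  - intros y Hy. apply lt_flag_0. rewrite Nat.add_1_r.
    pose proof (triangle_mono (S y) (a + b)). lia.
Qed.

Lemma unpair2_pair a b : unpair2 (pairN a b) = b.
Proof. unfold unpair2. rewrite unpair_sum_pair, pairN_triangle. lia. Qed.

Lemma unpair1_pair a b : unpair1 (pairN a b) = a.
Proof. unfold unpair1. rewrite unpair_sum_pair, unpair2_pair. lia. Qed.

Definition code_hd (c : nat) : nat := unpair1 (c - 1).
Definition code_tl (c : nat) : nat := unpair2 (c - 1).
Definition code_skip (i c : nat) : nat :=
  nat_rect (fun _ => nat) c (fun _ r => code_tl r) i.
Definition code_nth (i c : nat) : nat := code_hd (code_skip i c).
Definition code_length (c : nat) : nat :=
  bmin (fun i => if code_skip i c =? 0 then 1 else 0) (c + 1).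

Definition x_skip (i c : expr) : expr :=
  EApp2 (ERec (EVar 0) (EVar 1) (x_unpair2 (ESub (EVar 1) (EConst 1)))) i c.
Definition x_nth (i c : expr) : expr :=
  x_unpair1 (ESub (x_skip i c) (EConst 1)).
Definition x_length (a : expr) : expr :=
  EApp1 (EMin (EAdd (EVar 0) (EConst 1))
              (EIfz (x_skip (EVar 0) (EVar 1)) (EConst 1) (EConst 0))) a.

Lemma code_hd_code l : code_hd (code_list l) = hd 0 l.
Proof.
  destruct l; [reflexivity|]. unfold code_hd. simpl.
  rewrite Nat.sub_0_r. apply unpair1_pair.
Qed.

Lemma code_tl_code l : code_tl (code_list l) = code_list (tl l).
Proof.
  destruct l; [reflexivity|]. unfold code_tl. simpl.
  rewrite Nat.sub_0_r. apply unpair2_pair.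
Qed.

Lemma code_skip_code i l : code_skip i (code_list l) = code_list (skipn i l).
Proof.
  induction i as [|i IH]; [reflexivity|].
  change (code_skip (S i) (code_list l)) with (code_tl (code_skip i (code_list l))).
  rewrite IH, code_tl_code. f_equal. clear IH.
  revert l. induction i; intros [|x l]; simpl; auto.
Qed.

Lemma code_nth_code i l : code_nth i (code_list l) = nth i l 0.
Proof.
  unfold code_nth. rewrite code_skip_code, code_hd_code.
  revert l. induction i; intros [|x l]; simpl; auto.
Qed.

Lemma code_length_code l : code_length (code_list l) = length l.
Proof.
  assert (Hge : length l <= code_list l).
  { induction l; simpl; auto. rewrite pairN_triangle. lia. }
  unfold code_length. apply bmin_eq.
  - lia.
  - rewrite code_skip_code, skipn_all2 by lia. simpl. discriminate.
  - intros y Hy. rewrite code_skip_code.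
    destruct (skipn y l) eqn:E; [| reflexivity].
    apply (f_equal (@length nat)) in E. rewrite length_skipn in E. simpl in E. lia.
Qed.

Definition parity (x : nat) : nat := nat_rect (fun _ => nat) 0 (fun _ r => 1 - r) x.
Definition half (x : nat) : nat := nat_rect (fun _ => nat) 0 (fun i r => r + parity i) x.

Definition x_parity (a : expr) : expr :=
  EApp1 (ERec (EVar 0) (EConst 0) (ESub (EConst 1) (EVar 1))) a.
Definition x_half (a : expr) : expr :=
  EApp1 (ERec (EVar 0) (EConst 0) (EAdd (EVar 1) (x_parity (EVar 0)))) a.

Lemma parity_half k :
  parity (2*k) = 0 /\ half (2*k) = k /\ parity (2*k+1) = 1 /\ half (2*k+1) = k.
Proof.
  induction k as [|k [H1 [H2 [H3 H4]]]]; [repeat split; reflexivity|].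
  replace (2 * S k) with (S (2*k+1)) by lia.
  replace (S (2*k+1) + 1) with (S (S (2*k+1))) by lia.
  cbn [parity half nat_rect]. fold (parity (2*k+1)) (half (2*k+1)).
  rewrite H3, H4. simpl. lia.
Qed.

Lemma parity_even t : parity t = if Nat.even t then 0 else 1.
Proof.
  destruct (Nat.Even_or_Odd t) as [[k ->]|[k ->]];
    pose proof (parity_half k) as [? [? [? ?]]];
    [rewrite Nat.even_even | rewrite Nat.even_odd]; auto.
Qed.

Lemma half_div2 t : half t = Nat.div2 t.
Proof.
  destruct (Nat.Even_or_Odd t) as [[k ->]|[k ->]];
    pose proof (parity_half k) as [? [? [? ?]]];
    [rewrite Nat.div2_double | rewrite Nat.div2_odd']; auto.
Qed.

Lemma div2_lt t j : t < 2 * j -> Nat.div2 t < j.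
Proof. intros H. pose proof (Nat.div2_odd t). destruct (Nat.odd t); simpl in *; lia. Qed.

Lemma den_x_pair a b l : den (x_pair a b) l = pairN (den a l) (den b l).
Proof. simpl. rewrite pairN_triangle. reflexivity. Qed.

Ltac simpl_den :=
  repeat progress (
    cbn [den nth];
    change (den (x_unpair1 ?a) ?l) with (unpair1 (den a l)) in *;
    change (den (x_unpair2 ?a) ?l) with (unpair2 (den a l)) in *;
    change (den (x_lt ?a ?b) ?l) with (lt_flag (den a l) (den b l)) in *;
    change (den (x_length ?a) ?l) with (code_length (den a l)) in *;
    change (den (x_nth ?i ?c) ?l) with (code_nth (den i l) (den c l)) in *;
    change (den (x_half ?a) ?l) with (half (den a l)) in *;
    change (den (x_parity ?a) ?l) with (parity (den a l)) in *;
    rewrite ?den_x_pair, ?unpair1_pair, ?unpair2_pair).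

Lemma length_prefix g k : length (prefix g k) = k.
Proof. unfold prefix. rewrite length_map, length_seq. auto. Qed.

Lemma nth_prefix g k t : t < k -> nth t (prefix g k) 0 = g t.
Proof.
  intros. unfold prefix.
  rewrite nth_indep with (d' := g 0) by (rewrite length_map, length_seq; auto).
  rewrite map_nth, seq_nth; auto.
Qed.

Lemma map_prefix (e g : nat -> nat) i :
  (forall t, t < i -> e t = g t) -> map e (seq 0 i) = prefix g i.
Proof.
  intros H. unfold prefix. apply map_ext_in. intros t Ht. apply in_seq in Ht.
  apply H. lia.
Qed.

(** [run_within h n g B]: the first positive value of [h <n, g[0..i)>] with
    [i < B], or [0] if the machine [h] gives no answer at [n] within [B]
    prefixes of [g]. *)
Definition run_within (h : nat -> nat) (n : nat) (g : baire) (B : nat) : nat :=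
  let i0 := bmin (fun i => lt_flag 0 (h (pairN n (code_list (prefix g i))))) B in
  if lt_flag i0 B =? 0 then 0 else h (pairN n (code_list (prefix g i0))).

Lemma run_within_spec h g q n :
  assoc_eval h g q -> exists i, forall B, run_within h n g B = if i <? B then S (q n) else 0.
Proof.
  intros Hq. destruct (Hq n) as [i [Hpos [Hz Hv]]]. exists i. intros B.
  assert (Hzero : forall y, y < Nat.min i B ->
            lt_flag 0 (h (pairN n (code_list (prefix g y)))) = 0).
  { intros y Hy. rewrite Hz by lia. reflexivity. }
  unfold run_within. destruct (Nat.ltb_spec i B) as [HiB | HBi].
  - rewrite (bmin_eq _ B i HiB); [| rewrite lt_flag_1; auto; discriminate |].
    + rewrite lt_flag_1 by auto. simpl. lia.
    + intros y Hy. apply Hzero. lia.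
  - rewrite bmin_all0, lt_flag_0 by (auto; intros y Hy; apply Hzero; lia). reflexivity.
Qed.

(** Least-number principle for associates: if the machine answers at every
    [n] on some prefix, and every answer is [S (q n)], it computes [q]. *)
Lemma assoc_eval_intro h g q :
  (forall n, exists k, 0 < h (pairN n (code_list (prefix g k)))) ->
  (forall n k, 0 < h (pairN n (code_list (prefix g k))) ->
               h (pairN n (code_list (prefix g k))) = S (q n)) ->
  assoc_eval h g q.
Proof.
  intros Hans Hval n. destruct (Hans n) as [k Hk].
  induction k as [k IH] using lt_wf_ind.
  destruct (classic (exists j, j < k /\ 0 < h (pairN n (code_list (prefix g j)))))
    as [[j [Hjk Hj]] | Hnone].
  - exact (IH j Hjk Hj).
  - exists k. split; [exact Hk | split].
    + intros j Hj. apply NNPP. intros Hne. apply Hnone. exists j. split; [auto | lia].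
    + rewrite Hval by exact Hk. lia.
Qed.

(** * Currying associates

    Given an associate [h] of [F : <p,r> |-> q], the curried machine
    [curry_assoc h] reads [p] and, on a query [m = <n, code r[0..j)>] about
    [r], answers once it has read [j] symbols of [p]: it runs [h] at [n] on
    the first [2j+1] symbols of [pairB p r] and reports the first answer it
    finds (or [0]).  Its output [curry h p] is an associate of [r |-> F<p,r>]. *)
Section Currying.
Variable h : nat -> nat.

(** Symbol [t] of [pairB p r], read from the codes of prefixes of [p] and [r]
    at positions 2 and 4 of the argument list. *)
Definition x_interleave : expr :=
  EIfz (x_parity (EVar 0)) (x_nth (x_half (EVar 0)) (EVar 2))
                           (x_nth (x_half (EVar 0)) (EVar 4)).

(** On arguments [[code p[0..j); n; code r[0..j)]]: the bounded run
    [run_within h n (pairB p r) (2j+1)]. *)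
Definition x_curry_run : expr :=
  ELet (EMin (EAdd (EMul (EConst 2) (x_length (EVar 2))) (EConst 1))
             (x_lt (EConst 0) (ECall h (x_pair (EVar 2) (EBuild (EVar 0) x_interleave)))))
       (EIfz (x_lt (EVar 0) (EAdd (EMul (EConst 2) (x_length (EVar 3))) (EConst 1)))
             (EConst 0)
             (ECall h (x_pair (EVar 2) (EBuild (EVar 0) x_interleave)))).

(** On [<m, code u>]: answer [S (curried value)] once [u] is as long as the
    prefix of [r] encoded in [m]. *)
Definition x_curry : expr :=
  EApp2 (EIfz (x_lt (x_length (EVar 1)) (x_length (x_unpair2 (EVar 0))))
              (EAdd (EApp3 x_curry_run (EVar 1) (x_unpair1 (EVar 0))
                                       (x_unpair2 (EVar 0))) (EConst 1))
              (EConst 0))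
        (x_unpair1 (EVar 0)) (x_unpair2 (EVar 0)).

Definition curry_assoc (x : nat) : nat := den x_curry [x].

Definition query_length (m : nat) : nat := code_length (unpair2 m).

Definition curry (p : baire) (m : nat) : nat :=
  den x_curry_run [code_list (prefix p (query_length m)); unpair1 m; unpair2 m].

Lemma curry_assoc_computable : computable_nat h -> computable_nat curry_assoc.
Proof. intros H. apply compile_nat. cbn. tauto. Qed.

Lemma curry_assoc_val m u : curry_assoc (pairN m (code_list u)) =
  if lt_flag (length u) (query_length m) =? 0
  then S (den x_curry_run [code_list u; unpair1 m; unpair2 m]) else 0.
Proof.
  unfold curry_assoc, x_curry. simpl_den. rewrite code_length_code, Nat.add_1_r.
  reflexivity.
Qed.

Lemma curry_assoc_correct p : assoc_eval curry_assoc p (curry p).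
Proof.
  intros m. exists (query_length m).
  rewrite !curry_assoc_val, length_prefix, lt_flag_0 by lia. simpl.
  split; [lia | split; [| rewrite Nat.sub_0_r; reflexivity]].
  intros j Hj. rewrite curry_assoc_val, length_prefix, lt_flag_1 by lia. reflexivity.
Qed.

Lemma x_interleave_correct p r j n t i : t < 2 * j ->
  den x_interleave [t; i; code_list (prefix p j); n; code_list (prefix r j)]
  = pairB p r t.
Proof.
  intros Ht. unfold x_interleave. simpl_den.
  rewrite !code_nth_code, parity_even, half_div2. unfold pairB.
  destruct (Nat.even t); simpl; apply nth_prefix, div2_lt; auto.
Qed.

Lemma curry_pair p r n j :
  curry p (pairN n (code_list (prefix r j))) = run_within h n (pairB p r) (2*j+1).
Proof.
  assert (Hbuild : forall i, i <= 2 * j ->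
    map (fun t => den x_interleave [t; i; code_list (prefix p j); n;
                                    code_list (prefix r j)]) (seq 0 i)
    = prefix (pairB p r) i).
  { intros i Hi. apply map_prefix. intros t Ht. apply x_interleave_correct. lia. }
  unfold curry, query_length, x_curry_run.
  rewrite unpair1_pair, unpair2_pair, code_length_code, length_prefix. simpl_den.
  rewrite code_length_code, length_prefix.
  set (i0 := bmin _ _).
  assert (Hi0 : i0 = bmin (fun i => lt_flag 0 (h (pairN n (code_list (prefix (pairB p r) i)))))
                          (2*j+1)).
  { apply bmin_ext. intros y Hy. simpl_den. rewrite Hbuild by lia. reflexivity. }
  unfold run_within. rewrite <- Hi0.
  destruct (lt_flag_cases i0 (2*j+1)) as [[H1 H2]|[H1 H2]]; rewrite H2; cbn [Nat.eqb]; auto.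
  rewrite Hbuild by lia. reflexivity.
Qed.

Lemma curry_correct p r q : assoc_eval h (pairB p r) q -> assoc_eval (curry p) r q.
Proof.
  intros Hq. apply assoc_eval_intro.
  - intros n. destruct (run_within_spec _ _ _ n Hq) as [i Hi].
    exists i. rewrite curry_pair, Hi. destruct (Nat.ltb_spec i (2*i+1)); lia.
  - intros n j. destruct (run_within_spec _ _ _ n Hq) as [i Hi].
    rewrite curry_pair, Hi. destruct (i <? 2*j+1); lia.
Qed.
End Currying.

(** * Evaluating curried associates

    Given an associate [hK] of [K], the machine [apply_assoc hK] computes
    [<p,r> |-> eta_{K(p)}(r)].  On a query at [n] with a prefix [w] of
    [pairB p r] of length [L], it simulates [K(p)] by bounded runs of [hK] on
    the part of [p] contained in [w], asking it about the prefixes of [r]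
    contained in [w], and answers as soon as [K(p)] answers. *)

Definition not_one (x : nat) : nat := (x - 1) + (1 - x).

Lemma finite_bound (Q : nat -> nat -> Prop) : (forall y, exists i, Q y i) ->
  forall N, exists B, forall y, y <= N -> exists i, i <= B /\ Q y i.
Proof.
  intros H N. induction N as [|N [B HB]].
  - destruct (H 0) as [i Hi]. exists i. intros y Hy.
    replace y with 0 by lia. eauto.
  - destruct (H (S N)) as [i Hi]. exists (B + i). intros y Hy.
    destruct (Nat.eq_dec y (S N)) as [->|Hne]; [exists i; split; [lia | auto]|].
    destruct (HB y) as [i' [Hi'1 Hi'2]]; [lia|]. exists i'. split; [lia | auto].
Qed.

Section Evaluation.
Variable hK : nat -> nat.

(** Symbol [t] of [p], i.e. symbol [2t] of [pairB p r], read from the code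
    of [w] at position 3. *)
Definition x_even_symbol : expr := x_nth (EMul (EConst 2) (EVar 0)) (EVar 3).

(** On [[m; code w; b]]: the bounded run [run_within hK m p (b+1)]. *)
Definition x_run_on_p : expr :=
  ELet (EMin (EAdd (EVar 2) (EConst 1))
             (x_lt (EConst 0) (ECall hK (x_pair (EVar 1) (EBuild (EVar 0) x_even_symbol)))))
       (EIfz (x_lt (EVar 0) (EAdd (EVar 3) (EConst 1))) (EConst 0)
             (ECall hK (x_pair (EVar 1) (EBuild (EVar 0) x_even_symbol)))).

(** Symbol [t] of [r], i.e. symbol [2t+1] of [pairB p r]. *)
Definition x_odd_symbol : expr :=
  x_nth (EAdd (EMul (EConst 2) (EVar 0)) (EConst 1)) (EVar 3).

(** On [[y; n; code w]]: the simulated answer of [K(p)] to the query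
    [<n, code r[0..y)>], using all of [p] available in [w]. *)
Definition x_simulated_answer : expr :=
  EApp3 x_run_on_p (x_pair (EVar 1) (EBuild (EVar 0) x_odd_symbol)) (EVar 2)
        (x_half (EAdd (x_length (EVar 2)) (EConst 1))).

Definition x_not_one (a : expr) : expr :=
  EApp1 (EAdd (ESub (EVar 0) (EConst 1)) (ESub (EConst 1) (EVar 0))) a.

(** On [[n; code w]]: find the first prefix of [r] in [w] on which the
    simulated [K(p)] does not answer [1] (i.e. does not say "no output yet");
    if [K(p)] answers [S v] with [v > 0] there, output [v]. *)
Definition x_apply_body : expr :=
  ELet (EMin (EAdd (x_half (x_length (EVar 1))) (EConst 1)) (x_not_one x_simulated_answer))
   (ELet x_simulated_answer
     (EIfz (x_lt (EVar 1) (EAdd (x_half (x_length (EVar 3))) (EConst 1))) (EConst 0)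
           (EIfz (x_lt (EConst 1) (EVar 0)) (EConst 0) (ESub (EVar 0) (EConst 1))))).

Definition apply_assoc (x : nat) : nat :=
  den (EApp2 x_apply_body (x_unpair1 (EVar 0)) (x_unpair2 (EVar 0))) [x].

Lemma apply_assoc_computable : computable_nat hK -> computable_nat apply_assoc.
Proof. intros H. apply compile_nat. cbn. tauto. Qed.

Section OnPrefix.
Variables (p r : baire) (L : nat).
Let w := prefix (pairB p r) L.

Lemma even_symbol_correct t i m b : t < b -> b <= Nat.div2 (L + 1) ->
  den x_even_symbol [t; i; m; code_list w; b] = p t.
Proof.
  intros H1 H2. unfold x_even_symbol. simpl_den. rewrite code_nth_code.
  unfold w. rewrite nth_prefix.
  - unfold pairB. rewrite Nat.even_even, Nat.div2_double. reflexivity.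
  - pose proof (Nat.div2_odd (L + 1)). destruct (Nat.odd (L + 1)); simpl in *; lia.
Qed.

Lemma run_on_p_correct m b : b <= Nat.div2 (L + 1) ->
  den x_run_on_p [m; code_list w; b] = run_within hK m p (b + 1).
Proof.
  intros Hb.
  assert (Hbuild : forall i, i <= b ->
    map (fun t => den x_even_symbol [t; i; m; code_list w; b]) (seq 0 i) = prefix p i).
  { intros i Hi. apply map_prefix. intros t Ht. apply even_symbol_correct; lia. }
  unfold x_run_on_p. simpl_den.
  set (i0 := bmin _ _).
  assert (Hi0 : i0 = bmin (fun i => lt_flag 0 (hK (pairN m (code_list (prefix p i)))))
                          (b + 1)).
  { apply bmin_ext. intros y Hy. simpl_den. rewrite Hbuild by lia. reflexivity. }
  unfold run_within. rewrite <- Hi0.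
  destruct (lt_flag_cases i0 (b + 1)) as [[H1 H2]|[H1 H2]]; rewrite H2; cbn [Nat.eqb]; auto.
  rewrite Hbuild by lia. reflexivity.
Qed.

Lemma odd_symbol_correct t y n : t < y -> y <= Nat.div2 L ->
  den x_odd_symbol [t; y; n; code_list w] = r t.
Proof.
  intros H1 H2. unfold x_odd_symbol. simpl_den. rewrite code_nth_code.
  unfold w. rewrite nth_prefix.
  - unfold pairB. rewrite Nat.even_odd, Nat.div2_odd'. reflexivity.
  - pose proof (Nat.div2_odd L). destruct (Nat.odd L); simpl in *; lia.
Qed.

Definition simulated_answer (n y : nat) : nat :=
  run_within hK (pairN n (code_list (prefix r y))) p (Nat.div2 (L + 1) + 1).

Lemma simulated_answer_correct y n : y <= Nat.div2 L ->
  den x_simulated_answer [y; n; code_list w] = simulated_answer n y.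
Proof.
  intros Hy. unfold x_simulated_answer. simpl_den.
  replace (code_length (code_list w)) with L
    by (rewrite code_length_code; symmetry; apply length_prefix).
  rewrite half_div2.
  rewrite (map_prefix _ r y) by (intros t Ht; apply odd_symbol_correct; lia).
  apply run_on_p_correct. lia.
Qed.

Lemma apply_assoc_val n :
  let j0 := bmin (fun y => not_one (simulated_answer n y)) (Nat.div2 L + 1) in
  apply_assoc (pairN n (code_list w)) =
  if lt_flag j0 (Nat.div2 L + 1) =? 0 then 0 else
  if lt_flag 1 (simulated_answer n j0) =? 0 then 0 else simulated_answer n j0 - 1.
Proof.
  intros j0. unfold apply_assoc, x_apply_body. simpl_den.
  replace (code_length (code_list w)) with L
    by (rewrite code_length_code; symmetry; apply length_prefix).
  rewrite half_div2.
  set (i0 := bmin _ _).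
  assert (Hi0 : i0 = j0).
  { apply bmin_ext. intros y Hy. unfold x_not_one. cbn [den nth].
    rewrite simulated_answer_correct by lia. reflexivity. }
  rewrite Hi0.
  destruct (lt_flag_cases j0 (Nat.div2 L + 1)) as [[H1 H2]|[H1 H2]];
    rewrite H2; cbn [Nat.eqb]; auto.
  rewrite simulated_answer_correct by lia. reflexivity.
Qed.
End OnPrefix.

Section Correctness.
Variables (p r : baire) (k q : baire).
Hypothesis HK : assoc_eval hK p k.
Hypothesis Hk : assoc_eval k r q.

Lemma run_on_p_cases m B : run_within hK m p B = 0 \/ run_within hK m p B = S (k m).
Proof.
  destruct (run_within_spec _ _ _ m HK) as [i Hi]. rewrite Hi.
  destruct (i <? B); auto.
Qed.

(** Every answer of [apply_assoc hK] at [n] is [S (q n)]: the first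
    prefix of [r] on which the simulated [K(p)] answers is the one on which
    [K(p)] answers. *)
Lemma apply_assoc_answer n L :
  0 < apply_assoc (pairN n (code_list (prefix (pairB p r) L))) ->
  apply_assoc (pairN n (code_list (prefix (pairB p r) L))) = S (q n).
Proof.
  destruct (Hk n) as [js [Kpos [Kz Kv]]].
  rewrite apply_assoc_val. set (A := simulated_answer p r L n).
  set (j0 := bmin (fun y => not_one (A y)) (Nat.div2 L + 1)).
  destruct (lt_flag_cases j0 (Nat.div2 L + 1)) as [[H1 H2]|[H1 H2]];
    rewrite H2; cbn [Nat.eqb]; [|lia].
  destruct (lt_flag_cases 1 (A j0)) as [[H3 H4]|[H3 H4]]; rewrite H4; cbn [Nat.eqb]; [|lia].
  intros _. destruct (bmin_found _ _ H1) as [_ Hbefore]. fold j0 in Hbefore.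
  set (m := fun y => pairN n (code_list (prefix r y))).
  assert (Hj0 : A j0 = S (k (m j0))).
  { destruct (run_on_p_cases (m j0) (Nat.div2 (L + 1) + 1)); unfold A, simulated_answer, m in *; lia. }
  assert (Hzero : forall y, y < j0 -> k (m y) = 0).
  { intros y Hy. specialize (Hbefore y Hy). unfold not_one in Hbefore.
    destruct (run_on_p_cases (m y) (Nat.div2 (L + 1) + 1)); unfold A, simulated_answer, m in *; lia. }
  assert (Hjs : j0 = js).
  { destruct (lt_eq_lt_dec j0 js) as [[H|H]|H]; auto.
    - specialize (Kz _ H). unfold m in Hj0. lia.
    - specialize (Hzero _ H). unfold m in Hzero. lia. }
  subst js. rewrite Hj0. unfold m in *. lia.
Qed.

(** [apply_assoc hK] answers at [n] once [w] contains enough of [p] for [hK]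
    to answer all queries up to the prefix of [r] on which [K(p)] answers. *)
Lemma apply_assoc_answers n :
  exists L, 0 < apply_assoc (pairN n (code_list (prefix (pairB p r) L))).
Proof.
  destruct (Hk n) as [js [Kpos [Kz Kv]]].
  set (m := fun y => pairN n (code_list (prefix r y))).
  destruct (finite_bound _ (fun y => run_within_spec hK p k (m y) HK) js) as [B HB].
  assert (Hrun : forall y, y <= js ->
            run_within hK (pairN n (code_list (prefix r y))) p (B + js + 1 + 1)
            = S (k (pairN n (code_list (prefix r y))))).
  { intros y Hy. destruct (HB y Hy) as [i [Hi Hrun]]. unfold m in Hrun. rewrite Hrun.
    destruct (Nat.ltb_spec i (B + js + 1 + 1)); lia. }
  exists (2 * (B + js + 1)). rewrite apply_assoc_val.
  unfold simulated_answer.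
  rewrite Nat.div2_double, Nat.div2_odd', (bmin_eq _ _ js).
  - rewrite lt_flag_1 by lia. cbn [Nat.eqb]. rewrite Hrun by lia.
    rewrite lt_flag_1 by lia. cbn [Nat.eqb]. lia.
  - lia.
  - rewrite Hrun by lia. unfold not_one. lia.
  - intros y Hy. rewrite Hrun by lia. specialize (Kz y Hy). unfold not_one. lia.
Qed.
End Correctness.

Lemma apply_assoc_correct p r k q :
  assoc_eval hK p k -> assoc_eval k r q -> assoc_eval apply_assoc (pairB p r) q.
Proof.
  intros HK Hk. apply assoc_eval_intro.
  - apply (apply_assoc_answers p r k q HK Hk).
  - intros n L. apply (apply_assoc_answer p r k q HK Hk).
Qed.
End Evaluation.

Lemma assoc_eval_functional h g q1 q2 : assoc_eval h g q1 -> assoc_eval h g q2 -> q1 = q2.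
Proof.
  intros H1 H2. apply functional_extensionality. intros n.
  destruct (H1 n) as [k1 [P1 [Z1 V1]]]. destruct (H2 n) as [k2 [P2 [Z2 V2]]].
  assert (k1 = k2) as <-.
  { destruct (lt_eq_lt_dec k1 k2) as [[H|H]|H]; auto.
    - specialize (Z2 _ H). lia.
    - specialize (Z1 _ H). lia. }
  congruence.
Qed.

Lemma deltaS_functional q b1 b2 : deltaS q b1 -> deltaS q b2 -> b1 = b2.
Proof.
  intros [[-> H1]|[-> [n H1]]] [[-> H2]|[-> [m H2]]]; auto;
    exfalso; first [apply H1; apply H2 | apply H2; apply H1].
Qed.

Lemma deltaA_functional {X : Type} (dX : rep X) k A A' :
  (forall x, exists p, dX p x) -> deltaA dX k A -> deltaA dX k A' -> A = A'.
Proof.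
  intros Hsurj [chi [Hc Hci]] [chi' [Hc' Hci']].
  apply functional_extensionality. intros x. apply propositional_extensionality.
  destruct (Hsurj x) as [px Hpx].
  destruct (Hc px x Hpx (ex_intro _ (chi x) eq_refl)) as [q [b [Hq [Hb Hcb]]]].
  destruct (Hc' px x Hpx (ex_intro _ (chi' x) eq_refl)) as [q' [b' [Hq' [Hb' Hcb']]]].
  rewrite (assoc_eval_functional _ _ _ _ Hq Hq') in Hb.
  pose proof (deltaS_functional _ _ _ Hb Hb') as <-.
  assert (E : chi x = chi' x) by congruence.
  split; intros HA; apply NNPP; intros HnA.
  - apply Hci' in HnA. rewrite <- E in HnA. apply Hci in HnA. auto.
  - apply Hci in HnA. rewrite E in HnA. apply Hci' in HnA. auto.
Qed.

Lemma deltaSub_surjective (R : baire -> Prop) (r : sub R) : exists p, deltaSub R p r.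
Proof. exists (proj1_sig r). reflexivity. Qed.

Lemma prefix_agree (a b : baire) k :
  prefix a k = prefix b k <-> forall t, t < k -> a t = b t.
Proof.
  split.
  - intros H t Ht. rewrite <- (nth_prefix a k t Ht), <- (nth_prefix b k t Ht), H.
    reflexivity.
  - intros H. unfold prefix. apply map_ext_in. intros t Ht. apply in_seq in Ht.
    apply H. lia.
Qed.

Lemma assoc_eval_continuous h g q n : assoc_eval h g q ->
  exists k, forall g' q', prefix g' k = prefix g k -> assoc_eval h g' q' -> q' n = q n.
Proof.
  intros Hq. destruct (Hq n) as [k [P0 [Z0 V0]]]. exists k.
  intros g' q' Hpre Hq'. destruct (Hq' n) as [k1 [P1 [Z1 V1]]].
  assert (Eshort : forall j, j <= k -> prefix g' j = prefix g j).
  { intros j Hj. apply prefix_agree. intros t Ht. apply (proj1 (prefix_agree _ _ k) Hpre).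
    lia. }
  assert (k1 = k) as ->.
  { destruct (lt_eq_lt_dec k1 k) as [[H|H]|H]; auto.
    - rewrite Eshort in P1 by lia. specialize (Z0 _ H). lia.
    - specialize (Z1 _ H). rewrite Eshort in Z1 by lia. lia. }
  rewrite V1, V0, Hpre. reflexivity.
Qed.

Lemma functional_realizer_exists {Z W : Type} (dZ : rep Z) (dW : rep W)
  (g : Z -> W -> Prop) :
  (forall k z z', dZ k z -> dZ k z' -> z = z') -> (forall y, exists s, dW s y) ->
  exists G : pfun, functional G /\ realizes dZ dW g G /\
    forall k s, G k s -> exists z, dZ k z /\ exists y, g z y.
Proof.
  intros HdZ HdW.
  set (sel := fun k => epsilon (inhabits (fun _ : nat => 0))
                 (fun s => exists z y, dZ k z /\ g z y /\ dW s y)).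
  exists (fun k s => (exists z, dZ k z /\ exists y, g z y) /\ s = sel k).
  split; [| split].
  - intros k s1 s2 [_ ->] [_ ->]. reflexivity.
  - intros k z Hkz [y Hy]. destruct (HdW y) as [s Hs].
    assert (Hsel : exists z' y', dZ k z' /\ g z' y' /\ dW (sel k) y').
    { unfold sel. apply epsilon_spec. exists s, z, y. auto. }
    destruct Hsel as [z' [y' [Hkz' [Hg' Hs']]]].
    rewrite <- (HdZ _ _ _ Hkz Hkz') in Hg'.
    exists (sel k), y'. split; [split; eauto | auto].
  - intros k s [Hdom _]. exact Hdom.
Qed.

Lemma pinned_realizer {Z W : Type} (dZ : rep Z) (dW : rep W) (g : Z -> W -> Prop)
  (G : pfun) k z s y :
  (forall k z z', dZ k z -> dZ k z' -> z = z') ->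
  functional G -> realizes dZ dW g G -> dZ k z -> dW s y -> g z y ->
  exists G' : pfun, functional G' /\ realizes dZ dW g G' /\ G' k s.
Proof.
  intros HdZ HGf HG Hkz Hsy Hg.
  exists (fun k' s' => (k' = k /\ s' = s) \/ (k' <> k /\ G k' s')).
  split; [| split; [| left; auto]].
  - intros a b1 b2 [[-> ->]|[Ha H1]] [[Ha' ->]|[Ha' H2]]; try congruence.
    exact (HGf a b1 b2 H1 H2).
  - intros k' z' Hk'z' Hdom. destruct (classic (k' = k)) as [->|Hne].
    + rewrite (HdZ _ _ _ Hk'z' Hkz). exists s, y. auto.
    + destruct (HG k' z' Hk'z' Hdom) as [s' [y' [H1 H2]]]. exists s', y'. auto.
Qed.

(** * Las Vegas computability implies Weihrauch reducibility *)

Definition success_set (R : baire -> Prop) (F2 : pfun) (p : baire) : sub R -> Prop :=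
  fun r => exists q, F2 (pairB p (proj1_sig r)) q /\ forall n, q n = 0.

Section SuccessSet.
Variables (R : baire -> Prop) (F2 : pfun) (h2 : nat -> nat) (p : baire).
Hypothesis HF2 : forall a q, F2 a q -> assoc_eval h2 a q.
Hypothesis Htotal : forall r, R r -> exists q, F2 (pairB p r) q.

Lemma curried_test_spec (r : sub R) : exists q,
  assoc_eval (curry h2 p) (proj1_sig r) q /\
  ((forall n, q n = 0) <-> success_set R F2 p r).
Proof.
  destruct (Htotal _ (proj2_sig r)) as [q Hq]. exists q.
  split; [apply curry_correct, HF2, Hq | split].
  - intros Hz. exists q. auto.
  - intros [q' [Hq' Hz]].
    rewrite (assoc_eval_functional _ _ _ _ (HF2 _ _ Hq) (HF2 _ _ Hq')). exact Hz.
Qed.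

Lemma nonzero_of_not_all_zero (q : baire) : ~ (forall n, q n = 0) -> exists n, q n <> 0.
Proof.
  intros Hq. apply NNPP. intros Hn. apply Hq. intros n. apply NNPP. intros Hqn.
  apply Hn. eauto.
Qed.

Lemma success_set_name : deltaA (deltaSub R) (curry h2 p) (success_set R F2 p).
Proof.
  set (S := success_set R F2 p).
  exists (fun r => if excluded_middle_informative (S r) then false else true).
  split.
  - intros a r Har _. unfold deltaSub in Har. subst a.
    destruct (curried_test_spec r) as [q [Hq Hiff]].
    eexists q, _. split; [exact Hq | split; [| reflexivity]].
    destruct (excluded_middle_informative (S r)) as [HS|HS].
    + left. split; [reflexivity | apply Hiff, HS].
    + right. split; [reflexivity |].
      apply nonzero_of_not_all_zero. intros Hz. apply HS, Hiff, Hz.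
  - intros r. destruct (excluded_middle_informative (S r)); split;
      intros; auto; try discriminate; tauto.
Qed.

(** Success sets are closed: failure at [r] is witnessed by a nonzero output
    symbol, which depends only on a finite prefix of [r]. *)
Lemma success_set_closed : closedR (success_set R F2 p).
Proof.
  intros r HnS. destruct (curried_test_spec r) as [q [Hq Hiff]].
  destruct (nonzero_of_not_all_zero q) as [n Hn]; [intros Hz; apply HnS, Hiff, Hz|].
  destruct (assoc_eval_continuous _ _ _ n Hq) as [k Hk].
  exists k. intros r' Hpre HS'.
  destruct (curried_test_spec r') as [q' [Hq' Hiff']].
  apply Hn. rewrite <- (Hk _ _ Hpre Hq'). apply Hiff'. exact HS'.
Qed.
End SuccessSet.

(** The reduction: the instance is the curried test, a negative name of the
    success set [S_p], which lies in the domain of [P_I C_R]; any point of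
    [S_p] chosen by a realizer is advice on which [F1] is correct. *)
Lemma las_vegas_to_weihrauch (X Y : Type) (dX : rep X) (dY : rep Y)
  (R : baire -> Prop) (mu : (sub R -> Prop) -> ereal) (I : interval)
  (f : X -> Y -> Prop) :
  las_vegas dX dY f R mu I ->
  weihrauch dX dY f (deltaA (deltaSub R)) (deltaSub R) (PC R mu I).
Proof.
  intros [F1 [F2 [HF1 [[h2 [Hh2 HF2]] HLV]]]].
  exists F1, (assoc_eval (curry_assoc h2)). split; [exact HF1 | split].
  { exists (curry_assoc h2). split; [apply curry_assoc_computable; exact Hh2 | auto]. }
  intros G _ HG p x Hpx Hdom.
  destruct (HLV p x Hpx Hdom) as [Htotal [[y0 Hy0] [Hmu Hsolve]]].
  assert (Hinst : PC R mu I (success_set R F2 p) y0).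
  { split; [apply (success_set_closed R F2 h2 p HF2 Htotal) | eauto]. }
  destruct (HG (curry h2 p) _ (success_set_name R F2 h2 p HF2 Htotal) (ex_intro _ y0 Hinst))
    as [s [y [HGs [Hsy [_ [_ [_ HSy]]]]]]].
  destruct (Hsolve y HSy) as [q [y' [Hq Hf]]].
  exists q, y'. split; [| exact Hf].
  exists (curry h2 p), s. split; [apply curry_assoc_correct|]. split; [exact HGs|].
  unfold deltaSub in Hsy. rewrite <- Hsy. exact Hq.
Qed.

(** * Weihrauch reducibility implies Las Vegas computability *)

Lemma evaluated_test_spec (R : baire -> Prop) hK p k (A : sub R -> Prop) :
  assoc_eval hK p k -> deltaA (deltaSub R) k A -> forall r : sub R, exists q,
    assoc_eval (apply_assoc hK) (pairB p (proj1_sig r)) q /\ ((forall n, q n = 0) <-> A r).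
Proof.
  intros HK [chi [Hchi HchiA]] r.
  destruct (Hchi (proj1_sig r) r eq_refl (ex_intro _ (chi r) eq_refl))
    as [q [b [Hq [Hb Hchib]]]].
  exists q. split; [exact (apply_assoc_correct hK _ _ _ _ HK Hq) | split].
  - intros Hz. apply NNPP. intros HnA. apply HchiA in HnA. rewrite Hchib in HnA.
    subst b. destruct Hb as [[Hf _]|[_ [n Hn]]]; [congruence | exact (Hn (Hz n))].
  - intros HA. destruct Hb as [[_ Hz]|[Hbt _]]; [exact Hz|]. exfalso.
    apply (proj1 (HchiA r)); [congruence | exact HA].
Qed.

(** The Las Vegas algorithm: the test evaluates the instance [K(p)] on the
    advice [r], the output map is the outer reduction [H].  [H] is correct on
    every [r] in the named closed set [A], because the reduction also works
    with a realizer of [P_I C_R] pinned to answer [K(p)] with [r]. *)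
Lemma weihrauch_to_las_vegas (X Y : Type) (dX : rep X) (dY : rep Y)
  (R : baire -> Prop) (mu : (sub R -> Prop) -> ereal)
  (Hext : forall A B, (forall r, A r <-> B r) -> mu A = mu B)
  (I : interval) (f : X -> Y -> Prop) :
  weihrauch dX dY f (deltaA (deltaSub R)) (deltaSub R) (PC R mu I) ->
  las_vegas dX dY f R mu I.
Proof.
  intros [H [K [HH [[hK [HhK HKc]] HW]]]].
  assert (HdA : forall k A A', deltaA (deltaSub R) k A -> deltaA (deltaSub R) k A' -> A = A').
  { intros k A A'. apply deltaA_functional. apply deltaSub_surjective. }
  destruct (functional_realizer_exists _ (deltaSub R) (PC R mu I) HdA
              (deltaSub_surjective R)) as [G0 [HG0f [HG0 HG0dom]]].
  exists H, (assoc_eval (apply_assoc hK)). split; [exact HH | split].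
  { exists (apply_assoc hK). split; [apply apply_assoc_computable; exact HhK | auto]. }
  intros p x Hpx Hdom. cbv zeta.
  destruct (HW G0 HG0f HG0 p x Hpx Hdom) as [_ [_ [[k [s [HKk [HG0s _]]]] _]]].
  destruct (HG0dom k s HG0s) as [A [HkA [y [HclA [HneA [HmuA HAy]]]]]].
  pose proof (HKc _ _ HKk) as Hk.
  pose proof (evaluated_test_spec R hK p k A Hk HkA) as Hspec.
  assert (HS : forall r : sub R, (exists q, assoc_eval (apply_assoc hK)
             (pairB p (proj1_sig r)) q /\ forall n, q n = 0) <-> A r).
  { intros r. destruct (Hspec r) as [q [Hq Hiff]]. split.
    - intros [q' [Hq' Hz]]. apply Hiff.
      rewrite (assoc_eval_functional _ _ _ _ Hq Hq'). exact Hz.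
    - intros HA. exists q. split; [exact Hq | apply Hiff, HA]. }
  split; [| split; [| split]].
  - intros r Hr. destruct (Hspec (exist _ r Hr)) as [q [Hq _]]. exists q. exact Hq.
  - exists y. apply HS, HAy.
  - rewrite (Hext _ A HS). exact HmuA.
  - intros r Hr. apply HS in Hr.
    destruct (pinned_realizer _ _ (PC R mu I) G0 k A (proj1_sig r) r HdA HG0f HG0 HkA
                eq_refl (conj HclA (conj HneA (conj HmuA Hr)))) as [G [HGf [HG HGk]]].
    destruct (HW G HGf HG p x Hpx Hdom)
      as [q [y' [[k' [s' [HKk' [HGs' HHs']]]] [HdY Hf]]]].
    rewrite (assoc_eval_functional _ _ _ _ (HKc _ _ HKk') Hk) in HGs'.
    rewrite (HGf _ _ _ HGs' HGk) in HHs'.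
    exists q, y'. auto.
Qed.

Theorem theorem3p5 (X Y : Type) (dX : rep X) (dY : rep Y)
  (HX : is_rep dX) (HY : is_rep dY)
  (R : baire -> Prop) (mu : (sub R -> Prop) -> ereal) (Hmu : borel_measure R mu)
  (I : interval) (HI : interval_wf I) (f : X -> Y -> Prop) :
  weihrauch dX dY f (deltaA (deltaSub R)) (deltaSub R) (PC R mu I)
  <-> las_vegas dX dY f R mu I.
Proof.
  split.
  - apply weihrauch_to_las_vegas. exact (proj1 Hmu).
  - apply las_vegas_to_weihrauch.
Qed.
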